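(* Let $\ell\ge 1$, let $k_1$ be a nonnegative integer and $k_2,\ldots,k_\ell$ positive integers, and let $D$ be a digraph with $\delta^+(D)\geq \sum_{i=1}^{\ell} k_i$. Then for every vertex $v\in V(D)$, $D$ contains (as a subdigraph) a path $P(k'_1,k'_2,\ldots,k'_\ell)$ with initial vertex $v$ such that $k'_i\ge k_i$ for every odd $i$ and $k'_i=k_i$ for every even $i$.
   Context: $\delta^+(D)$ denotes the minimum out-degree of $D$. For a nonnegative integer $k_1$ and positive integers $k_2,\ldots,k_\ell$, $P(k_1,\ldots,k_\ell)$ denotes the oriented path obtained from an undirected path $v_1v_2\ldots v_{\ell+1}$ by replacing, for each $i\in\{1,\ldots,\ell\}$, the edge $v_iv_{i+1}$ by a directed path of length $k_i$ from $v_i$ to $v_{i+1}$ if $i$ is odd, and from $v_{i+1}$ to $v_i$ if $i$ is even (if $k_1=0$ then $v_1=v_2$). Its initial vertex is $v_1$. *)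

From mathcomp Require Import all_boot.
Set Implicit Arguments. Unset Strict Implicit. Unset Printing Implicit Defensive.

(* A digraph is a finite type V with an arc relation E (E x y = arc x -> y),
   assumed loopless (irreflexive) in the statement; no parallel arcs by construction. *)

Definition outdeg (V : finType) (E : rel V) (x : V) : nat := #|[set y | E x y]|.

(* For ks = [:: k_1; ...; k_l] (0-indexed list), the orientation sequence of the
   oriented path P(k_1,...,k_l) read from its initial vertex: the i-th block
   (1-indexed) consists of k_i arcs, forward (true) if i is odd, backward if even.
   With 0-indexing, block i is forward iff i is even. *)
Definition path_dirs (ks : seq nat) : seq bool :=
  flatten [seq nseq (nth 0 ks i) (~~ odd i) | i <- iota 0 (size ks)].

Definition contains_oriented_path (V : finType) (E : rel V) (ks : seq nat) (v : V) :=
  exists s : seq V,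
    [/\ size s = (size (path_dirs ks)).+1, uniq s, head v s = v &
        forall j, j < size (path_dirs ks) ->
          if nth true (path_dirs ks) j then E (nth v s j) (nth v s j.+1)
          else E (nth v s j.+1) (nth v s j)].

From mathcomp Require Import all_boot.
Set Implicit Arguments. Unset Strict Implicit. Unset Printing Implicit Defensive.

(* Induction on a vertex set S containing v, with the out-degree bound taken inside S.
   If the first block is positive, step from v to an out-neighbour and delete v.
   Otherwise the path starts with a backward block of length b > 0.  If v reaches a
   vertex w that cannot reach v, walk forward from v to w through vertices that reach
   v, delete every vertex that reaches v (the others keep all their out-neighbours)
   and recurse from w.  If not, every vertex reachable from v returns to v; there, a
   sink strong component of the reachable set minus v contains an in-neighbour of v
   and has minimum out-degree one less, so induction on b gives a directed path of
   length b into v.  Deleting all its vertices but the far end costs at most b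
   out-degree, and we recurse from that end. *)

Fixpoint dirs_from (fwd : bool) (ks : seq nat) : seq bool :=
  if ks is k :: r then nseq k fwd ++ dirs_from (~~ fwd) r else [::].

Fixpoint lengthens (fwd : bool) (ks ks' : seq nat) : bool :=
  match ks, ks' with
  | [::], [::] => true
  | k :: r, k' :: r' => (if fwd then k <= k' else k' == k) && lengthens (~~ fwd) r r'
  | _, _ => false
  end.

Lemma path_dirsE ks : path_dirs ks = dirs_from true ks.
Proof.
rewrite /path_dirs.
suff shift m : flatten [seq nseq (nth 0 ks i) (~~ odd (i + m)) | i <- iota 0 (size ks)]
             = dirs_from (~~ odd m) ks.
  by rewrite -(shift 0); congr flatten; apply: eq_map => i; rewrite addn0.
elim: ks m => [|k r IH] m //=.
rewrite add0n -(IH m.+1) -(addn0 1) iotaDl -map_comp.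
by congr (_ ++ flatten _); apply: eq_map => i /=; rewrite addnS add0n.
Qed.

Lemma lengthens_nth fwd ks ks' : lengthens fwd ks ks' ->
  size ks' = size ks /\ forall i, i < size ks ->
    if odd i == fwd then nth 0 ks' i = nth 0 ks i else nth 0 ks i <= nth 0 ks' i.
Proof.
elim: ks ks' fwd => [|k r IH] [|k' r'] fwd //= /andP[le_k /IH[-> nth_r]].
split=> // [[|i]] /=; first by case: fwd le_k nth_r => // /eqP.
by move=> /nth_r; case: fwd {le_k nth_r}; case: (odd i).
Qed.

Lemma lengthens_refl0 fwd n : lengthens fwd (nseq n 0) (nseq n 0).
Proof. by elim: n fwd => //= n IH fwd; rewrite IH; case: fwd. Qed.

Lemma dirs_from_nseq0 fwd n : dirs_from fwd (nseq n 0) = [::].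
Proof. by elim: n fwd => //= n IH fwd; rewrite IH. Qed.

Section OrientedWalks.

Variables (T : Type) (E : rel T).

Fixpoint oriented_walk (d : seq bool) (s : seq T) : bool :=
  match d, s with
  | [::], [:: _] => true
  | b :: d', x :: ((y :: _) as s') => (if b then E x y else E y x) && oriented_walk d' s'
  | _, _ => false
  end.

Lemma oriented_walk_size d s : oriented_walk d s -> size s = (size d).+1.
Proof. by elim: d s => [|b d IH] [|x [|y s]] //= /andP[_ /IH /= ->]. Qed.

Lemma oriented_walk_nth d s x0 : oriented_walk d s ->
  forall j, j < size d ->
  if nth true d j then E (nth x0 s j) (nth x0 s j.+1) else E (nth x0 s j.+1) (nth x0 s j).
Proof.
elim: d s => [|b d IH] [|x [|y s]] //= /andP[E_xy walk_s] [|j] //=.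
exact: IH walk_s j.
Qed.

Lemma oriented_walk_cat d1 d2 x s1 s2 :
  oriented_walk d1 (x :: s1) -> oriented_walk d2 (last x s1 :: s2) ->
  oriented_walk (d1 ++ d2) (x :: s1 ++ s2).
Proof.
elim: d1 x s1 => [|b d1 IH] x [|y s1] //= /andP[-> walk1] walk2.
exact: IH walk1 walk2.
Qed.

Lemma oriented_walk_nseq b x p :
  oriented_walk (nseq (size p) b) (x :: p) = path (fun y z => if b then E y z else E z y) x p.
Proof. by elim: p x => //= y p IH x; rewrite IH. Qed.

End OrientedWalks.

Section Reachability.

Variables (T : finType) (e : rel T).

Lemma connect_to_last x p z : path e x p -> z \in x :: p -> connect e z (last x p).
Proof.
move=> + z_p; case/splitPl: z_p => p1 p2 <-; rewrite cat_path last_cat => /andP[_ e_p2].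
exact: path_connect e_p2 _ (mem_last _ _).
Qed.

Lemma connect_exit (P : {pred T}) x y : x \in P -> y \notin P -> connect e x y ->
  exists u w, [/\ connect e x u, u \in P, w \notin P & e u w].
Proof.
move=> Px notPy /connectP[p e_p y_last]; subst y.
elim: p x Px e_p notPy => [|z p IH] x Px /=; first by move=> _ /negP.
case/andP=> e_xz e_p notPlast; have [Pz | notPz] := boolP (z \in P).
  have [u [w [z_u Pu notPw e_uw]]] := IH z Pz e_p notPlast.
  by exists u, w; split=> //; apply: connect_trans (connect1 e_xz) z_u.
by exists x, z.
Qed.

End Reachability.

Section Digraph.

Variables (V : finType) (E : rel V).

Definition induced (S : {set V}) : rel V := fun x y => [&& x \in S, y \in S & E x y].

Definition outdeg_in (S : {set V}) (x : V) : nat := #|[set y in S | E x y]|.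

Implicit Types S X : {set V}.

Lemma induced_sub S : subrel (induced S) E.
Proof. by move=> x y /and3P[]. Qed.

Lemma connect_induced_mem S x y : x \in S -> connect (induced S) x y -> y \in S.
Proof.
move=> xS /connectP[p S_p ->]; case/lastP: p S_p => [|p z] //.
by rewrite rcons_path last_rcons => /andP[_ /and3P[]].
Qed.

Lemma connect_induced_closed S X x y :
  (forall z w, z \in X -> induced S z w -> w \in X) ->
  x \in X -> connect (induced S) x y -> connect (induced X) x y.
Proof.
move=> closedX xX /connectP[p S_p ->].
elim: p x xX S_p => //= w p IH z zX /andP[S_zw S_p].
have wX := closedX z w zX S_zw.
apply: connect_trans (IH w wX S_p); apply: connect1.
by rewrite /induced zX wX (induced_sub S_zw).
Qed.

Lemma outdeg_in_le S S' X x : {in S, forall y, E x y -> y \in S' :|: X} ->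
  outdeg_in S x <= outdeg_in S' x + #|X|.
Proof.
move=> outS; apply: leq_trans (leq_card_setU _ X).1.
apply: subset_leq_card; apply/subsetP => y; rewrite !inE => /andP[yS Exy].
by have := outS y yS Exy; rewrite !inE Exy andbT.
Qed.

Lemma sink_strong_component (D : {set V}) : D != set0 ->
  exists X : {set V}, [/\ X != set0, X \subset D,
    {in X & D, forall z w, E z w -> w \in X} &
    {in X &, forall y z, connect (induced X) y z}].
Proof.
case/set0Pn => x0 x0D.
pose reach x := [set y | connect (induced D) x y].
have reach_trans x y z : y \in reach x -> z \in reach y -> z \in reach x.
  by rewrite !inE; apply: connect_trans.
(* Every vertex reached from a vertex with fewest reachable vertices reaches it back. *)
case: (arg_minnP (fun x => #|reach x|) x0D) => x xD min_x.
have reachD : reach x \subset D.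
  by apply/subsetP => y; rewrite inE; apply: connect_induced_mem.
have closed_x z w : z \in reach x -> induced D z w -> w \in reach x.
  by move=> xz /connect1 zw; apply: (reach_trans x z) xz _; rewrite inE.
exists (reach x); split=> //.
- by apply/set0Pn; exists x; rewrite inE.
- move=> z w xz wD Ezw; apply: (closed_x z w xz).
  by rewrite /induced wD Ezw (subsetP reachD z xz).
move=> y z xy xz; apply: (connect_induced_closed closed_x xy).
have /eqP reach_y : reach y == reach x.
  rewrite eqEcard min_x ?andbT; last exact: (subsetP reachD y xy).
  by apply/subsetP => w; apply: reach_trans.
by move: xz; rewrite -reach_y inE.
Qed.

Hypothesis E_irr : irreflexive E.

Lemma long_backward_path K (C : {set V}) v : v \in C ->
  {in C, forall x, K <= outdeg_in C x} ->
  {in C, forall x, connect (induced C) x v} ->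
  exists q, [/\ size q = K, path (fun x y => E y x) v q, uniq (v :: q) & {subset q <= C}].
Proof.
elim: K C v => [|K IH] C v vC degC reachC; first by exists [::].
have [y yC Evy] : exists2 y, y \in C & E v y.
  by case/card_gt0P: (leq_trans (ltn0Sn K) (degC v vC)) => y; rewrite inE => /andP[]; exists y.
have : C :\ v != set0.
  by apply/set0Pn; exists y; rewrite !inE yC andbT; apply: contraTneq Evy => ->; rewrite E_irr.
case/sink_strong_component => X [/set0Pn[x xX] XC closedX strongX].
have XCv z : z \in X -> z \in C /\ z != v.
  by move/(subsetP XC); rewrite !inE => /andP[].
have outX z w : z \in X -> w \in C -> E z w -> w \in X :|: [set v].
  move=> zX wC Ezw; rewrite !inE orbC.
  by case: eqVneq => //= wv; rewrite (closedX z w) // !inE wv.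
have vX : v \notin X by apply/negP => /XCv[_ /eqP].
have [a aX Eav] : exists2 a, a \in X & E a v.
  have [u [w [_ uX wX /and3P[_ wC Euw]]]] := connect_exit xX vX (reachC x (XCv x xX).1).
  by exists u => //; move: (outX u w uX wC Euw); rewrite !inE (negbTE wX) => /eqP <-.
have degX z : z \in X -> K <= outdeg_in X z.
  move=> zX; have := leq_trans (degC z (XCv z zX).1) (outdeg_in_le (fun w => outX z w zX)).
  by rewrite cards1 addn1 ltnS.
have [q [size_q q_path uniq_q qX]] := IH X a aX degX (fun z zX => strongX z a zX aX).
have notv_aq : v \notin a :: q.
  apply/negP; rewrite inE => /predU1P[va | /qX]; last by apply/negP: vX.
  by rewrite va aX in vX.
exists (a :: q); split; [by rewrite /= size_q | by rewrite /= Eav | by rewrite cons_uniq notv_aq |].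
by move=> z; rewrite inE => /predU1P[-> | /qX /XCv[] //]; case: (XCv a aX).
Qed.

Definition path_from S (ks : seq nat) (v : V) : Prop :=
  exists ks' t, [/\ lengthens true ks ks', oriented_walk E (dirs_from true ks') (v :: t),
                   uniq (v :: t) & {subset v :: t <= S}].

Lemma path_from_nseq0 S n v : v \in S -> path_from S (nseq n 0) v.
Proof.
move=> vS; exists (nseq n 0), [::].
by rewrite lengthens_refl0 dirs_from_nseq0; split=> // z; rewrite inE => /eqP ->.
Qed.

Lemma splice_walks S S' d1 d2 v q t : S' \subset S ->
  oriented_walk E d1 (v :: q) -> uniq (v :: q) -> {subset belast v q <= S :\: S'} ->
  oriented_walk E d2 (last v q :: t) -> uniq (last v q :: t) -> {subset last v q :: t <= S'} ->
  [/\ oriented_walk E (d1 ++ d2) (v :: q ++ t), uniq (v :: q ++ t) & {subset v :: q ++ t <= S}].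
Proof.
move=> sS' walk1 uniq1 sub1 walk2 uniq2 sub2.
have vq_S z : z \in v :: q -> z \in S.
  rewrite lastI mem_rcons inE => /predU1P[-> | /sub1 /setDP[] //].
  exact: (subsetP sS') (sub2 _ (mem_head _ _)).
split; first exact: oriented_walk_cat.
- rewrite -cat_cons cat_uniq uniq1; move: uniq2; rewrite cons_uniq => /andP[last_t ->].
  rewrite andbT; apply/hasPn => z zt; rewrite lastI mem_rcons inE negb_or.
  apply/andP; split; first by apply: contraNneq last_t => <-.
  by apply/negP => /sub1 /setDP[_]; rewrite sub2 // inE zt orbT.
- move=> z; rewrite -cat_cons mem_cat => /orP[/vq_S // | zt].
  by apply: (subsetP sS'); apply: sub2; rewrite inE zt orbT.
Qed.

Lemma path_from_forward S S' k0 k r v q : S' \subset S ->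
  path E v q -> uniq (v :: q) -> {subset belast v q <= S :\: S'} ->
  path_from S' (k :: r) (last v q) -> k0 <= k + size q -> path_from S (k0 :: r) v.
Proof.
move=> sS' E_q uniq_q sub_q [[|k' r'] [t [//= /andP[le_k len_r] walk_t uniq_t sub_t]]] le_k0.
have walk_q : oriented_walk E (nseq (size q) true) (v :: q) by rewrite oriented_walk_nseq.
have [walk uniq_qt sub_qt] := splice_walks sS' walk_q uniq_q sub_q walk_t uniq_t sub_t.
exists ((k' + size q) :: r'), (q ++ t); split=> //.
  by rewrite /= len_r andbT (leq_trans le_k0) ?leq_add2r.
by rewrite /= addnC nseqD -catA.
Qed.

Lemma path_from_backward S S' r v q : S' \subset S ->
  path (fun x y => E y x) v q -> uniq (v :: q) -> {subset belast v q <= S :\: S'} ->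
  path_from S' r (last v q) -> path_from S [:: 0, size q & r] v.
Proof.
move=> sS' E_q uniq_q sub_q [ks' [t [len_r walk_t uniq_t sub_t]]].
have walk_q : oriented_walk E (nseq (size q) false) (v :: q) by rewrite oriented_walk_nseq.
have [walk uniq_qt sub_qt] := splice_walks sS' walk_q uniq_q sub_q walk_t uniq_t sub_t.
by exists [:: 0, size q & ks'], (q ++ t); split; rewrite //= eqxx.
Qed.

Section InductionStep.

Variables (S : {set V}) (v : V).
Hypothesis vS : v \in S.
Hypothesis IH : forall S' ks y, S' \subset S :\ v -> y \in S' -> 0 \notin behead ks ->
  {in S', forall x, sumn ks <= outdeg_in S' x} -> path_from S' ks y.

Lemma path_from_step_forward k r : 0 \notin r ->
  {in S, forall x, sumn (k.+1 :: r) <= outdeg_in S x} -> path_from S (k.+1 :: r) v.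
Proof.
move=> r_pos degS.
have [y yS Evy] : exists2 y, y \in S & E v y.
  have : 0 < outdeg_in S v by apply: leq_trans (degS v vS); rewrite /= addSn.
  by case/card_gt0P => y; rewrite inE => /andP[]; exists y.
have yv : y != v by apply: contraTneq Evy => ->; rewrite E_irr.
have yS' : y \in S :\ v by rewrite !inE yS yv.
apply: (path_from_forward (S' := S :\ v) (q := [:: y]) (k := k)); rewrite ?addn1 //=.
- exact: subsetDl.
- by rewrite Evy.
- by rewrite inE eq_sym yv.
- by move=> z; rewrite !inE => /eqP ->; rewrite eqxx vS.
apply: IH => // x /setD1P[_ xS].
have le_out : {in S, forall w, E x w -> w \in (S :\ v) :|: [set v]}.
  by move=> w wS _; rewrite !inE wS andbT orNb.
by have := leq_trans (degS x xS) (outdeg_in_le le_out); rewrite cards1 addn1 /= addSn ltnS.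
Qed.

Lemma path_from_step_escape k r y : 0 \notin r ->
  {in S, forall x, sumn (k :: r) <= outdeg_in S x} ->
  connect (induced S) v y -> ~~ connect (induced S) y v -> path_from S (k :: r) v.
Proof.
move=> r_pos degS vy yv.
pose A := [set x | connect (induced S) x v].
have vA : v \in A by rewrite inE.
have yA : y \notin A by rewrite inE.
have [u [w [vu uA wA /and3P[_ wS Euw]]]] := connect_exit vA yA vy.
case/connectP: vu => p0 /shortenP[p S_p uniq_p _] u_last.
have vpA : {subset v :: p <= A}.
  move=> z /(connect_to_last S_p); rewrite -u_last inE => zu.
  by apply: connect_trans zu _; rewrite inE in uA.
have vpS : {subset v :: p <= S}.
  by move=> z /(path_connect S_p); apply: connect_induced_mem.
apply: (path_from_forward (S' := S :\: A) (q := rcons p w) (k := k)); rewrite ?leq_addr //.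
- exact: subsetDl.
- by rewrite rcons_path (sub_path (@induced_sub S) S_p) -u_last Euw.
- by rewrite -rcons_cons rcons_uniq uniq_p andbT; apply: contra wA => /vpA.
- move=> z; rewrite belast_rcons => z_vp.
  by move: (vpA z z_vp); rewrite !inE vpS // => ->.
rewrite last_rcons; apply: IH => //.
- by apply: setDS; rewrite sub1set inE.
- by rewrite inE wA.
move=> x /setDP[xS xA].
have le_out : {in S, forall z, E x z -> z \in (S :\: A) :|: set0}.
  move=> z zS Exz; rewrite setU0 inE zS andbT; apply: contra xA; rewrite !inE.
  by apply: connect_trans; apply: connect1; rewrite /induced xS zS Exz.
by have := leq_trans (degS x xS) (outdeg_in_le le_out); rewrite cards0 addn0.
Qed.

Lemma path_from_step_return b r : 0 < b -> 0 \notin r ->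
  {in S, forall x, sumn [:: 0, b & r] <= outdeg_in S x} ->
  (forall y, connect (induced S) v y -> connect (induced S) y v) ->
  path_from S [:: 0, b & r] v.
Proof.
move=> b_pos r_pos degS back.
pose R := [set y | connect (induced S) v y].
have vR : v \in R by rewrite inE.
have RS : {subset R <= S} by move=> y; rewrite inE; apply: connect_induced_mem.
have closedR z w : z \in R -> induced S z w -> w \in R.
  by rewrite !inE => vz /connect1; apply: connect_trans vz.
have degR : {in R, forall x, b <= outdeg_in R x}.
  move=> x xR; have le_out : {in S, forall w, E x w -> w \in R :|: set0}.
    by move=> w wS Exw; rewrite setU0 (closedR x) // /induced RS // wS Exw.
  have := leq_trans (degS x (RS x xR)) (outdeg_in_le le_out).
  by rewrite cards0 addn0; apply: leq_trans; rewrite /= leq_addr.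
have returnR : {in R, forall x, connect (induced R) x v}.
  move=> x xR; apply: (connect_induced_closed closedR xR); apply: back.
  by rewrite inE in xR.
have [q [size_q q_path uniq_q qR]] := long_backward_path vR degR returnR.
pose X := [set z in belast v q].
have vqS : {subset v :: q <= S} by move=> z; rewrite inE => /predU1P[-> | /qR /RS].
rewrite -size_q; apply: (path_from_backward (S' := S :\: X)) => //.
- exact: subsetDl.
- by move=> z z_bl; rewrite !inE z_bl vqS ?mem_belast.
apply: IH => //.
- apply: setDS; rewrite sub1set inE.
  by move: b_pos; rewrite -size_q; case: (q) => //= q1 q' _; rewrite mem_head.
- rewrite !inE vqS ?mem_last // andbT.
  by move: uniq_q; rewrite lastI rcons_uniq => /andP[].
- by apply: contra r_pos => /mem_behead.
move=> x /setDP[xS xX].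
have le_out : {in S, forall w, E x w -> w \in (S :\: X) :|: X}.
  by move=> w wS _; rewrite !inE wS andbT orNb.
have card_X : #|X| <= b by rewrite -size_q -(size_belast v) cardsE card_size.
have := leq_trans (degS x xS) (outdeg_in_le le_out).
rewrite [sumn _]/= add0n addnC => /leq_trans /(_ (leq_add (leqnn _) card_X)).
by rewrite leq_add2r.
Qed.

End InductionStep.

Lemma path_from_outdeg S ks v : v \in S -> 0 \notin behead ks ->
  {in S, forall x, sumn ks <= outdeg_in S x} -> path_from S ks v.
Proof.
have [n leSn] := ubnP #|S|; elim: n => // n IHn in S ks v leSn *.
move=> vS ks_pos degS.
have IH S' ks' y : S' \subset S :\ v -> y \in S' -> 0 \notin behead ks' ->
    {in S', forall x, sumn ks' <= outdeg_in S' x} -> path_from S' ks' y.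
  move=> sS'; apply: IHn; apply: leq_ltn_trans (subset_leq_card sS') _.
  by move: leSn; rewrite (cardsD1 v S) vS.
case: ks ks_pos degS => [|[|k] r] /= ks_pos degS.
- exact: (path_from_nseq0 0).
- case: r ks_pos degS => [|b r] ks_pos degS; first exact: (path_from_nseq0 1).
  have b_pos : 0 < b by rewrite lt0n; apply: contra ks_pos => /eqP <-; rewrite mem_head.
  have r_pos : 0 \notin r by apply: contra ks_pos; rewrite inE => ->; rewrite orbT.
  case: (pickP (fun y => connect (induced S) v y && ~~ connect (induced S) y v)).
    by move=> y /andP[vy yv]; apply: (path_from_step_escape vS IH ks_pos degS vy yv).
  move=> back; apply: path_from_step_return => // y vy.
  by have := back y; rewrite vy => /negbFE.
- exact: path_from_step_forward.
Qed.

End Digraph.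

Theorem theorem19 (V : finType) (E : rel V) (ks : seq nat) :
  irreflexive E ->
  0 < size ks ->
  (forall i, 0 < i < size ks -> 0 < nth 0 ks i) ->
  (forall x : V, \sum_(k <- ks) k <= outdeg E x) ->
  forall v : V, exists ks' : seq nat,
    [/\ size ks' = size ks,
        (forall i, i < size ks ->
           if odd i then nth 0 ks' i = nth 0 ks i else nth 0 ks i <= nth 0 ks' i)
      & contains_oriented_path E ks' v].
Proof.
move=> E_irr _ ks_pos degE v.
have pos : 0 \notin behead ks.
  apply/negP => /(nthP 0)[i]; rewrite size_behead nth_behead => lt_i ks_i0.
  by move: (ks_pos i.+1); rewrite ks_i0 -ltn_predRL lt_i => /(_ isT).
have degT : {in [set: V], forall x, sumn ks <= outdeg_in E [set: V] x}.
  move=> x _; rewrite sumnE (leq_trans (degE x)) //.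
  by apply: subset_leq_card; apply/subsetP => y; rewrite !inE.
have [ks' [t [len walk uniq_t _]]] := path_from_outdeg E_irr (in_setT v) pos degT.
have [size_ks' nth_ks'] := lengthens_nth len.
exists ks'; split=> //.
  by move=> i /nth_ks'; case: (odd i).
exists (v :: t); rewrite path_dirsE; split=> //; first exact: oriented_walk_size walk.
exact: oriented_walk_nth walk.
Qed.
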